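(* Let $(G,t)$ be a non-trivial problem instance, let $X$ be a tidy modulator of $G$, and let $B$ be a biconnected induced subgraph of $G-X$. Then $|\partial_G(V(B))|\le 2|X|$.
   Context: $\mathrm{tw}$ is treewidth. A problem instance is $(G,t)$ with $t\in\mathbb{N}$. A modulator of $G$ is $X$ with $\mathrm{tw}(G-X)\le 2$; tidy if also $\mathrm{tw}(G-(X\setminus\{x\}))\le 2$ for all $x\in X$. $(G,t)$ is trivial if $|V(G)|\le 4$, or $\mathrm{tw}(G)\le 2$, or $t=0$, or some connected subgraph $H$ of $G$ satisfies $\mathrm{tw}\big(G[N_G[H]]\cup\binom{N_G(H)}{2}\big)\le 2$ (where $N_G(H)$ is the set of vertices outside $H$ adjacent to $H$, $N_G[H]=V(H)\cup N_G(H)$, and $\cup\binom{N_G(H)}{2}$ adds all edges among $N_G(H)$); otherwise non-trivial. A graph is biconnected if it is connected and has no articulation vertex. For $U\subseteq V(G)$, $\partial_G(U)$ is the set of vertices of $U$ having a neighbour outside $U$. *)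

From mathcomp Require Import all_boot.
Set Implicit Arguments. Unset Strict Implicit. Unset Printing Implicit Defensive.

(* Subgraphs considered here
   are described by a vertex set V : {set T} together with an edge relation
   E : rel T, of which only the pairs inside V are relevant. *)

Definition restr (T : finType) (V : {set T}) (E : rel T) : rel T :=
  [rel x y | [&& x \in V, y \in V & E x y]].

(* A finite tree on the node type I: symmetric, irreflexive, nonempty,
   connected, with exactly |I| - 1 (unordered) edges. *)
Definition is_tree (I : finType) (tI : rel I) : Prop :=
  [/\ symmetric tI, irreflexive tI, 0 < #|I|,
      (forall i j, connect tI i j) &
      #|[set p : I * I | tI p.1 p.2]| = 2 * (#|I| - 1)].

Definition tree_decomp_width (T : finType) (V : {set T}) (E : rel T)
    (I : finType) (tI : rel I) (bag : I -> {set T}) (k : nat) : Prop :=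
  is_tree tI /\ (forall i, bag i \subset V) /\
  [/\
      (forall v, v \in V -> exists i, v \in bag i),
      (forall u v, u \in V -> v \in V -> E u v ->
         exists i, (u \in bag i) && (v \in bag i)),
      (forall v i j, v \in bag i -> v \in bag j ->
         connect [rel a b | [&& tI a b, v \in bag a & v \in bag b]] i j) &
      (forall i, #|bag i| <= k.+1)].

Definition tw_le (T : finType) (V : {set T}) (E : rel T) (k : nat) : Prop :=
  exists (I : finType) (tI : rel I) (bag : I -> {set T}),
    tree_decomp_width V E tI bag k.

Definition modulator (T : finType) (e : rel T) (X : {set T}) : Prop :=
  tw_le (~: X) e 2.

Definition tidy_modulator (T : finType) (e : rel T) (X : {set T}) : Prop :=
  modulator e X /\ (forall x, x \in X -> tw_le (~: (X :\ x)) e 2).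

Definition nbh (T : finType) (e : rel T) (S : {set T}) : {set T} :=
  [set v | (v \notin S) && [exists u in S, e u v]].

Definition connected_subgraph (T : finType) (e : rel T) (S : {set T})
    (F : rel T) : Prop :=
  [/\ (forall u v, u \in S -> v \in S -> F u v -> e u v),
      S != set0 &
      (forall u v, u \in S -> v \in S -> connect (restr S F) u v)].

Definition torso_edges (T : finType) (e : rel T) (S : {set T}) : rel T :=
  [rel u v | e u v || [&& u \in nbh e S, v \in nbh e S & u != v]].

Definition trivial_instance (T : finType) (e : rel T) (t : nat) : Prop :=
  [\/ #|T| <= 4,
      tw_le [set: T] e 2,
      t = 0 |
      exists (S : {set T}) (F : rel T),
        connected_subgraph e S F /\ tw_le (S :|: nbh e S) (torso_edges e S) 2].

Definition connected_set (T : finType) (e : rel T) (S : {set T}) : Prop :=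
  S != set0 /\ (forall u v, u \in S -> v \in S -> connect (restr S e) u v).

Definition biconnected_set (T : finType) (e : rel T) (S : {set T}) : Prop :=
  connected_set e S /\
  (forall w, w \in S -> forall u v, u \in S :\ w -> v \in S :\ w ->
     connect (restr (S :\ w) e) u v).

Definition boundary (T : finType) (e : rel T) (U : {set T}) : {set T} :=
  [set u in U | [exists v, (v \notin U) && e u v]].

From mathcomp Require Import all_boot zify.
Set Implicit Arguments. Unset Strict Implicit. Unset Printing Implicit Defensive.

(* For x in X let Y_x be the component of x in G - (X \ x) - B.  As X is tidy,
   G - (X \ x) has treewidth at most 2 and hence no K4 minor (the bags meeting the
   branch sets of a K4 model would be pairwise intersecting subtrees, which by the Helly
   property share a bag of size 4).  Three vertices of a biconnected set root a triangle
   minor inside it, so the connected set Y_x, disjoint from B, sees at most two vertices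
   of B.  Every boundary vertex u of B is seen by some Y_x: let v be a neighbour of u
   outside B.  If v lies in X, take x = v.  Otherwise the component C of v in G - X - B
   either touches some x of X, and then C lies in Y_x, or has all its neighbours in B;
   then it has at most two neighbours, and contracting the rest of B onto one of them
   shows that the torso of C has treewidth at most 2, so the instance would be trivial.
   Summing over X gives |boundary B| <= 2 |X|. *)

Lemma card_bigcup_le (T I : finType) (X : {set I}) (A : I -> {set T}) :
  #|\bigcup_(x in X) A x| <= \sum_(x in X) #|A x|.
Proof.
apply: (big_rec2 (fun (U : {set T}) n => #|U| <= n)); first by rewrite cards0.
by move=> i U n _ U_le; apply: leq_trans (leq_card_setU _ _) _; apply: leq_add.
Qed.

Lemma disjoint_subsetD (T : finType) (A B R S : {set T}) :
  A \subset R :\: S -> B \subset S -> [disjoint A & B].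
Proof.
move=> sARS sBS; rewrite disjoints_subset (subset_trans sARS) // setDE.
by apply: subset_trans (subsetIr _ _) _; rewrite setCS.
Qed.

Lemma connect_exit (T : finType) (r : rel T) (A : {set T}) x y :
  connect r x y -> x \in A -> y \notin A ->
  exists z z', [/\ z \in A, z' \notin A & r z z'].
Proof.
move=> /connectP [p pth ->] {y}; elim: p x pth => [|z p IH] x /=.
  by move=> _ xA xNA; rewrite xA in xNA.
case/andP=> rxz pth xA lA; case: (boolP (z \in A)) => zA; first exact: IH pth zA lA.
by exists x, z.
Qed.

Section Connectivity.
Variables (T : finType) (r : rel T).
Hypothesis r_sym : symmetric r.

Lemma connect_restr_sub (A B : {set T}) x y :
  A \subset B -> connect (restr A r) x y -> connect (restr B r) x y.
Proof.
move=> sAB; apply: connect_sub => u v /and3P [uA vA ruv]; apply: connect1.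
by rewrite /restr /= (subsetP sAB _ uA) (subsetP sAB _ vA).
Qed.

Lemma restr_sym (A : {set T}) : symmetric (restr A r).
Proof. by move=> x y; rewrite /restr /= r_sym andbCA. Qed.

Lemma path_restr (A : {set T}) x p :
  path r x p -> all [in A] (x :: p) -> path (restr A r) x p.
Proof.
elim: p x => [|z p IH] x //= /andP [rxz pth] /and3P [xA zA pA].
by rewrite IH /= ?zA // andbT /restr /= xA zA rxz.
Qed.

Lemma path_restr_in (A : {set T}) x p : path (restr A r) x p -> all [in A] p.
Proof.
by elim: p x => [|z p IH] x //= /andP [/and3P [_ zA _] /IH ->]; rewrite zA.
Qed.

Lemma connected_set_root (A : {set T}) x :
  x \in A -> (forall y, y \in A -> connect (restr A r) x y) ->
  connected_set r A.
Proof.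
move=> xA xA_conn; split; first by apply/set0Pn; exists x.
move=> y z yA zA; apply: connect_trans (xA_conn z zA).
by rewrite (sym_connect_sym (restr_sym A)) xA_conn.
Qed.

Lemma connected_set1 x : connected_set r [set x].
Proof.
by apply: (connected_set_root (set11 x)) => y /set1P ->.
Qed.

Lemma path_connected_set x p :
  path r x p -> connected_set r [set:: x :: p].
Proof.
move=> pth; have xs : x \in [set:: x :: p] by rewrite inE mem_head.
apply: (connected_set_root xs) => y; rewrite inE => yp.
apply: path_connect yp; apply: path_restr => //.
by apply/allP => z; rewrite inE.
Qed.

Definition component (R : {set T}) v := [set w | connect (restr R r) v w].

Lemma component_id (R : {set T}) v : v \in component R v.
Proof. by rewrite inE connect0. Qed.

Lemma component_sub (R : {set T}) v : v \in R -> component R v \subset R.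
Proof.
move=> vR; apply/subsetP => w; rewrite inE => /connectP [p pth ->].
by have := mem_last v p; rewrite inE => /predU1P [-> //|/(allP (path_restr_in pth))].
Qed.

Lemma component_closed (R : {set T}) v x y :
  x \in component R v -> x \in R -> y \in R -> r x y -> y \in component R v.
Proof.
by rewrite !inE => vx xR yR rxy; apply: connect_trans vx (connect1 _); rewrite /restr /= xR yR.
Qed.

Lemma component_connected (R : {set T}) v : connected_set r (component R v).
Proof.
apply: (connected_set_root (component_id R v)) => w.
rewrite inE => /connectP [p pth ->]; apply/connectP; exists p => //.
apply: path_restr; first by apply: sub_path pth => x y /and3P [].
by apply/allP => z zp; rewrite inE (path_connect pth zp).
Qed.

Lemma component_edge (R R' : {set T}) v x w :
  R \subset R' -> v \in R -> x \in R' ->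
  w \in component R v -> r x w -> v \in component R' x.
Proof.
move=> sRR' vR xR' wC rxw; rewrite inE.
have wR' : w \in R' by apply: (subsetP sRR'); apply: (subsetP (component_sub vR)).
apply: connect_trans (connect1 (_ : restr R' r x w)) _; first by rewrite /restr /= xR' wR'.
apply: connect_restr_sub sRR' _; rewrite (sym_connect_sym (restr_sym R)).
by rewrite inE in wC.
Qed.

Lemma mem_nbh (S : {set T}) y u : y \in S -> u \notin S -> r y u -> u \in nbh r S.
Proof. by move=> yS uNS ryu; rewrite inE uNS; apply/exists_inP; exists y. Qed.

Lemma nbh_component_sub (R : {set T}) v :
  v \in R -> nbh r (component R v) \subset ~: R.
Proof.
move=> vR; apply/subsetP => z; rewrite in_set in_setC => /andP [zNC /exists_inP [w wC rwz]].
apply: contraNN zNC => zR.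
exact: component_closed wC (subsetP (component_sub vR) w wC) zR rwz.
Qed.

Lemma connected_set_neighbour (B : {set T}) u u' :
  connected_set r B -> u \in B -> u' \in B -> u' != u ->
  exists2 z, z \in B :\ u & r u z.
Proof.
move=> [_ B_conn] uB u'B u'u; have u'Nu : u' \notin [set u] by rewrite in_set1.
have [z [z' [/set1P -> z'Nu /and3P [_ z'B ruz']]]] :=
  connect_exit (B_conn u u' uB u'B) (set11 u) u'Nu.
by exists z'; rewrite // !inE -in_set1 z'Nu.
Qed.

End Connectivity.

(** * Subtrees and the Helly property *)

Section Trees.
Variables (I : finType) (r : rel I).
Hypotheses (r_sym : symmetric r) (r_irr : irreflexive r).

Definition nedges (U : {set I}) :=
  #|[set p : I * I | [&& p.1 \in U, p.2 \in U & r p.1 p.2]]|.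

(* Edges are counted as ordered pairs, as in [is_tree]. *)
Definition tree_on (U : {set I}) :=
  connected_set r U /\ nedges U = 2 * (#|U| - 1).

Definition leaf (U : {set I}) l m :=
  [/\ l \in U, m \in U, r l m & forall y, y \in U -> r l y -> y = m].

Lemma nedges_sum U : nedges U = \sum_(i in U) #|[set j in U | r i j]|.
Proof.
rewrite /nedges -sum1_card.
under [RHS]eq_bigr => i _ do rewrite -sum1_card.
by rewrite pair_big_dep; apply: eq_bigl => -[x y] /=; rewrite !inE.
Qed.

Lemma tree_on_leaf U : tree_on U -> 1 < #|U| -> exists l m, leaf U l m.
Proof.
move=> [[_ U_conn] U_edges] U_gt1.
case: (boolP [exists i in U, #|[set j in U | r i j]| <= 1]); last first.
  rewrite negb_exists_in => /forall_inP deg_ge2.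
  have : \sum_(i in U) 2 <= nedges U.
    by rewrite nedges_sum; apply: leq_sum => i /deg_ge2; rewrite ltnNge.
  by rewrite sum_nat_const U_edges; lia.
case/exists_inP => l lU deg_l.
have [j jU jl] : exists2 j, j \in U & j != l.
  case/card_gt1P: U_gt1 => x [y [xU yU xy]].
  by case: (eqVneq x l) => [xl|]; [exists y; rewrite // -xl eq_sym | exists x].
have jNl : j \notin [set l] by rewrite in_set1.
have [z [m [/set1P -> mNl /and3P [_ mU rlm]]]] :=
  connect_exit (U_conn l j lU jU) (set11 l) jNl.
have /cards1P [m' Nl] : #|[set j in U | r l j]| == 1.
  by rewrite eqn_leq deg_l card_gt0; apply/set0Pn; exists m; rewrite inE mU.
have Nl_eq y : y \in U -> r l y -> y = m'.
  by move=> yU rly; apply/set1P; rewrite -Nl inE yU.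
by exists l, m; split=> // y yU rly; rewrite (Nl_eq _ yU rly) (Nl_eq _ mU rlm).
Qed.

Section Leaf.
Variables (U : {set I}) (l m : I).
Hypothesis lm_leaf : leaf U l m.

Lemma leaf_neq : m != l.
Proof. by case: lm_leaf => _ _ rlm _; apply: contraTneq rlm => ->; rewrite r_irr. Qed.

Lemma leaf_neighbour_in (A : {set I}) :
  A \subset U -> connected_set r A -> l \in A -> A :\ l != set0 -> m \in A.
Proof.
case: lm_leaf => _ _ _ l_deg1 sAU [_ A_conn] lA /set0Pn [y /setD1P [yl yA]].
have yNl : y \notin [set l] by rewrite in_set1.
have [z [z' [/set1P -> z'l /and3P [_ z'A rlz']]]] :=
  connect_exit (A_conn l y lA yA) (set11 l) yNl.
by rewrite -(l_deg1 z') // (subsetP sAU).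
Qed.

(* A shortest path through [l] would enter and leave it via its only neighbour [m]. *)
Lemma connected_setD1_leaf (A : {set I}) :
  A \subset U -> connected_set r A -> A :\ l != set0 -> connected_set r (A :\ l).
Proof.
case: lm_leaf => _ _ _ l_deg1 sAU [_ A_conn] Al_ne; split=> // i j.
rewrite !inE => /andP [il iA] /andP [jl jA].
have /connectP [p0 pth0 Ej] := A_conn i j iA jA.
move: jl; rewrite Ej; case: (shortenP pth0) => p pth uq _ {p0 pth0 Ej} lastl.
have pA := path_restr_in pth.
have lNp : l \notin p.
  apply/negP => lp; move: uq lastl pA pth; case/splitPr: lp => p1 [|h p3] uq lastl.
    by rewrite last_cat eqxx in lastl.
  rewrite cat_path /= => pA /and3P [_ /and3P [lA _ rl] /andP [/and3P [_ hA rlh] _]].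
  have hm : h = m by apply: l_deg1; rewrite ?(subsetP sAU).
  have lm : last i p1 = m by apply: l_deg1; rewrite ?(subsetP sAU) // r_sym.
  move: uq; rewrite -cat_cons cat_uniq => /and3P [_ /hasP []].
  by exists h; [rewrite !inE eqxx orbT | rewrite hm -lm mem_last].
apply/connectP; exists p => //; apply: path_restr.
  by apply: sub_path pth => x y /and3P [].
apply/allP => z; rewrite inE => /predU1P [-> |zp]; first by rewrite !inE il iA.
by rewrite !inE (allP pA z zp) andbT; apply: contraNneq lNp => <-.
Qed.

Lemma nedgesD1_leaf : nedges (U :\ l) = (nedges U - 2)%N.
Proof.
case: lm_leaf => lU mU rlm l_deg1.
rewrite /nedges; set E := [set p : I * I | [&& p.1 \in U, p.2 \in U & r p.1 p.2]].
have -> : [set p : I * I | [&& p.1 \in U :\ l, p.2 \in U :\ l & r p.1 p.2]] =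
          E :\ (l, m) :\ (m, l).
  apply/setP => -[x y]; rewrite !inE /= !xpair_eqE.
  apply/idP/idP => [/and3P [/andP [xl xU] /andP [yl yU] rxy] | ].
    by rewrite xU yU rxy (negbTE xl) (negbTE yl) !andbF.
  case/and5P => yx xy xU yU rxy; rewrite xU yU rxy !andbT.
  apply/andP; split; apply/eqP => Exl.
    by move: xy; rewrite Exl eqxx (l_deg1 y yU) ?eqxx // -Exl.
  by move: yx; rewrite Exl eqxx (l_deg1 x xU) ?eqxx // r_sym -Exl.
have mlE : (m, l) \in E :\ (l, m).
  by rewrite !inE /= xpair_eqE (negbTE leaf_neq) mU lU r_sym rlm.
have lmE : (l, m) \in E by rewrite inE lU mU rlm.
by rewrite (cardsD1 (l, m) E) lmE (cardsD1 (m, l) (E :\ (l, m))) mlE; lia.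
Qed.

Lemma tree_onD1_leaf : tree_on U -> 1 < #|U| -> tree_on (U :\ l).
Proof.
case: (lm_leaf) => lU _ _ _ [U_conn U_edges] U_gt1.
have Ul_ne : U :\ l != set0 by rewrite -card_gt0 (cardsD1 l U) lU in U_gt1 *.
split; first exact: connected_setD1_leaf.
by rewrite nedgesD1_leaf U_edges (cardsD1 l U) lU; lia.
Qed.

End Leaf.

Lemma tree_helly (K : finType) (U : {set I}) (S : K -> {set I}) :
  tree_on U -> (forall a, S a \subset U) -> (forall a, connected_set r (S a)) ->
  (forall a b, S a :&: S b != set0) -> exists i, forall a, i \in S a.
Proof.
move: {2}#|U|.+1 (ltnSn #|U|) => n; elim: n U S => // n IH U S.
rewrite ltnS => Un U_tree sSU S_conn S_meet.
have [U_le1 | U_gt1] := leqP #|U| 1.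
  case/set0Pn: U_tree.1.1 => x xU; exists x => a.
  case/set0Pn: (S_conn a).1 => y ya.
  by rewrite (card_le1_eqP U_le1 y x (subsetP (sSU a) _ ya) xU).
have [l [m lm_leaf]] := tree_on_leaf U_tree U_gt1.
have [lU _ _ _] := lm_leaf.
case: (boolP [exists a, S a :\ l == set0]) => [/existsP [a /eqP Sa_l] | ].
  exists l => b; case/set0Pn: (S_meet a b) => z /setIP [za zb].
  case: (eqVneq z l) => [<- // | zl].
  by have := in_set0 z; rewrite -Sa_l !inE zl za.
rewrite negb_exists => /forallP Sl_ne.
have [i Si] : exists i, forall a, i \in S a :\ l.
  apply: (IH (U :\ l)).
  - by rewrite (cardsD1 l U) lU in Un.
  - exact: tree_onD1_leaf lm_leaf U_tree U_gt1.
  - by move=> a; apply: setSD.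
  - by move=> a; exact: (connected_setD1_leaf lm_leaf (sSU a) (S_conn a) (Sl_ne a)).
  move=> a b; case/set0Pn: (S_meet a b) => z /setIP [za zb].
  case: (eqVneq z l) => [zl | zl]; last by apply/set0Pn; exists z; rewrite !inE zl za zb.
  rewrite zl in za zb.
  have ma := leaf_neighbour_in lm_leaf (sSU a) (S_conn a) za (Sl_ne a).
  have mb := leaf_neighbour_in lm_leaf (sSU b) (S_conn b) zb (Sl_ne b).
  by apply/set0Pn; exists m; rewrite !inE (leaf_neq lm_leaf) ma mb.
by exists i => a; case/setD1P: (Si a).
Qed.

End Trees.

(** * Tree decompositions, K4 models and minors *)

Lemma is_tree_tree_on (I : finType) (tI : rel I) : is_tree tI -> tree_on tI [set: I].
Proof.
case=> _ _ I_gt0 tI_conn tI_edges; split.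
  split=> [|i j _ _]; first by rewrite -card_gt0 cardsT.
  by rewrite (@eq_connect _ _ tI) // => x y; rewrite /restr /= !inE.
by rewrite cardsT -tI_edges /nedges; apply: eq_card => p; rewrite !inE.
Qed.

Lemma bags_meeting_connected (T I : finType) (V : {set T}) (E : rel T)
    (tI : rel I) (bag : I -> {set T}) k (P : {set T}) :
  tree_decomp_width V E tI bag k -> P \subset V -> connected_set E P ->
  connected_set tI [set i | [exists v in P, v \in bag i]].
Proof.
case=> _ [_ [cover edge_bag bag_conn _]] sPV [P_ne P_conn].
set S := [set i | [exists v in P, v \in bag i]].
have inS v i : v \in P -> v \in bag i -> i \in S.
  by move=> vP vi; rewrite inE; apply/exists_inP; exists v.
have bag_connS v i j : v \in P -> v \in bag i -> v \in bag j -> connect (restr S tI) i j.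
  move=> vP vi vj; apply: connect_sub (bag_conn v i j vi vj) => a b /and3P [tab va vb].
  by apply: connect1; rewrite /restr /= tab (inS v a) ?(inS v b).
have along_path q v i : v \in P -> v \in bag i -> path (restr P E) v q ->
    forall j, last v q \in bag j -> connect (restr S tI) i j.
  elim: q v i => [|w q IH] v i vP vi /=; first by move=> _ j; apply: bag_connS.
  case/andP=> /and3P [_ wP Evw] pth j lj.
  have [l /andP [vl wl]] := edge_bag v w (subsetP sPV _ vP) (subsetP sPV _ wP) Evw.
  exact: connect_trans (bag_connS v i l vP vi vl) (IH w l wP wl pth j lj).
split=> [|i j].
  case/set0Pn: P_ne => v vP; have [i vi] := cover v (subsetP sPV _ vP).
  by apply/set0Pn; exists i; apply: inS vi.
rewrite !inE => /exists_inP [v1 v1P v1i] /exists_inP [v2 v2P v2j].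
have /connectP [q pth E2] := P_conn _ _ v1P v2P.
by apply: (along_path q v1 i v1P v1i pth); rewrite -E2.
Qed.

Definition touching (T : finType) (E : rel T) (A B : {set T}) :=
  [disjoint A & B] /\ exists x y, [/\ x \in A, y \in B & E x y].

Lemma touching_sym (T : finType) (E : rel T) (A B : {set T}) :
  symmetric E -> touching E A B -> touching E B A.
Proof.
move=> E_sym [dAB [x [y [xA yB Exy]]]].
by split; [rewrite disjoint_sym | exists y, x; rewrite E_sym].
Qed.

Lemma no_K4_model (T : finType) (V : {set T}) (E : rel T) (Z : 'I_4 -> {set T}) :
  tw_le V E 2 -> (forall a, Z a \subset V) -> (forall a, connected_set E (Z a)) ->
  (forall a b, a != b -> touching E (Z a) (Z b)) -> False.
Proof.
case=> I [tI [bag td]] sZV Z_conn Z_touch.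
have [[tI_sym tI_irr _ _ _] [_ [_ edge_bag _ width]]] := td.
pose S a := [set i | [exists v in Z a, v \in bag i]].
have S_conn a : connected_set tI (S a) := bags_meeting_connected td (sZV a) (Z_conn a).
have S_meet a b : S a :&: S b != set0.
  case: (eqVneq a b) => [<- | ab]; first by rewrite setIid; case: (S_conn a).
  have [_ [x [y [xa yb Exy]]]] := Z_touch a b ab.
  have [i /andP [xi yi]] := edge_bag x y (subsetP (sZV a) _ xa) (subsetP (sZV b) _ yb) Exy.
  apply/set0Pn; exists i; rewrite !inE.
  by apply/andP; split; apply/exists_inP; [exists x | exists y].
have [i Si] :=
  tree_helly tI_sym tI_irr (is_tree_tree_on td.1) (fun a => subsetT (S a)) S_conn S_meet.
have [f Hf] : exists f : 'I_4 -> T, forall a, f a \in Z a /\ f a \in bag i.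
  apply: (@fin_all_exists _ (fun=> T) (fun a v => v \in Z a /\ v \in bag i)) => a.
  by have := Si a; rewrite inE => /exists_inP [v va vi]; exists v.
have f_inj : injective f.
  move=> a b fab; apply/eqP; apply: contraT => ab.
  by have := disjointFr (Z_touch a b ab).1 (Hf a).1; rewrite fab (Hf b).1.
have : #|[set f a | a in 'I_4]| <= #|bag i|.
  by apply: subset_leq_card; apply/subsetP => x /imsetP [a _ ->]; exact: (Hf a).2.
by rewrite card_imset // card_ord; move: (width i); lia.
Qed.

Lemma no_K4_model4 (T : finType) (V : {set T}) (E : rel T) (Z1 Z2 Z3 Z4 : {set T}) :
  symmetric E -> tw_le V E 2 ->
  Z1 \subset V -> Z2 \subset V -> Z3 \subset V -> Z4 \subset V ->
  connected_set E Z1 -> connected_set E Z2 -> connected_set E Z3 -> connected_set E Z4 ->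
  touching E Z1 Z2 -> touching E Z1 Z3 -> touching E Z1 Z4 ->
  touching E Z2 Z3 -> touching E Z2 Z4 -> touching E Z3 Z4 -> False.
Proof.
move=> E_sym tw s1 s2 s3 s4 c1 c2 c3 c4 t12 t13 t14 t23 t24 t34.
apply: (@no_K4_model T V E (fun i => nth set0 [:: Z1; Z2; Z3; Z4] i) tw).
- by case=> [[|[|[|[|?]]]] ?].
- by case=> [[|[|[|[|?]]]] ?].
case=> [[|[|[|[|?]]]] ?] // [[|[|[|[|?]]]] ?] //= _; by [|apply: touching_sym].
Qed.

Lemma tw_le_minor (T : finType) (V W : {set T}) (E E' : rel T) (f : T -> T) k :
  tw_le V E k ->
  (forall w, w \in W -> connected_set E [set v in V | f v == w]) ->
  (forall a b, a \in W -> b \in W -> E' a b ->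
     exists u v, [/\ u \in V, v \in V, f u = a, f v = b & E u v]) ->
  tw_le W E' k.
Proof.
case=> I [tI [bag td]] fiber_conn lift.
have [_ [sbV [cover edge_bag bag_conn width]]] := td.
have in_image i v : v \in bag i -> f v \in W -> f v \in f @: bag i :&: W.
  by move=> vi fvW; rewrite inE fvW andbT; apply/imsetP; exists v.
exists I, tI, (fun i => f @: bag i :&: W); split; first exact: td.1.
split=> [i|]; first exact: subsetIr.
split=> [w wW | a b aW bW /(lift a b aW bW) [u [v [uV vV fua fvb Euv]]] |
         w i j | i].
- case/set0Pn: (fiber_conn w wW).1 => v; rewrite inE => /andP [vV /eqP fvw].
  by have [i vi] := cover v vV; exists i; rewrite -fvw in_image // fvw.
- have [i /andP [ui vi]] := edge_bag u v uV vV Euv.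
  by exists i; rewrite -fua -fvb !in_image // ?fua ?fvb.
- rewrite !inE => /andP [/imsetP [u ui ->] fuW] /andP [/imsetP [u' u'i fu'u] _].
  set F := [set v in V | f v == f u].
  have sFV : F \subset V by apply/subsetP => v /setIdP [].
  have [_ S_conn] := bags_meeting_connected td sFV (fiber_conn _ fuW).
  have inS v l : v \in bag l -> f v = f u -> l \in [set l | [exists v in F, v \in bag l]].
    move=> vl fvu; rewrite inE; apply/exists_inP; exists v => //.
    by rewrite inE fvu eqxx (subsetP (sbV l)).
  apply: connect_sub (S_conn i j (inS u i ui erefl) (inS u' j u'i (esym fu'u))).
  move=> a b /and3P [aS bS tab]; apply: connect1; rewrite /= tab /=.
  move: aS bS; rewrite !inE => /exists_inP [x /setIdP [_ /eqP fx] xa].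
  case/exists_inP => y /setIdP [_ /eqP fy] yb.
  by rewrite fuW !andbT; apply/andP; split; apply/imsetP; [exists x | exists y].
- apply: leq_trans (width i); apply: leq_trans (leq_imset_card f (bag i)).
  exact/subset_leq_card/subsetIl.
Qed.

Definition contract_map (T : finType) (P : {set T}) (p : T) (v : T) : T :=
  if v \in P then p else v.

Lemma contract_map_id (T : finType) (P : {set T}) p w :
  (w \in P -> w = p) -> contract_map P p w = w.
Proof. by rewrite /contract_map; case: ifP => // _ /(_ isT) ->. Qed.

Lemma contract_fiber_connected (T : finType) (V P : {set T}) (E : rel T) p w :
  symmetric E -> P \subset V -> p \in P -> connected_set E P ->
  w \in V -> (w \in P -> w = p) ->
  connected_set E [set v in V | contract_map P p v == w].
Proof.
move=> E_sym sPV pP P_conn wV wP.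
case: (boolP (w \in P)) => [wP' | wNP].
  rewrite (wP wP'); congr connected_set: P_conn; apply/setP => v; rewrite !inE /contract_map.
  case: (boolP (v \in P)) => [vP | vNP]; first by rewrite eqxx (subsetP sPV).
  by apply/esym/andP => -[_ /eqP vp]; rewrite vp pP in vNP.
have -> : [set v in V | contract_map P p v == w] = [set w]; last exact: connected_set1.
apply/setP => v; rewrite !inE /contract_map.
case: (boolP (v \in P)) => [vP | vNP]; last by case: (eqVneq v w) => [-> |]; rewrite ?wV ?andbF.
have neq_w x : x \in P -> (x == w) = false by move=> xP; apply: contraNF wNP => /eqP <-.
by rewrite (subsetP sPV _ vP) !neq_w.
Qed.

Lemma torso_tw_le_contract (T : finType) (e : rel T) (V C P : {set T}) p k :
  symmetric e -> tw_le V e k -> C :|: nbh e C \subset V ->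
  P \subset V -> p \in P -> connected_set e P ->
  (forall w, w \in C :|: nbh e C -> w \in P -> w = p) ->
  (forall a b, a \in nbh e C -> b \in nbh e C -> a != b ->
     exists u v, [/\ u \in V, v \in V, contract_map P p u = a, contract_map P p v = b & e u v]) ->
  tw_le (C :|: nbh e C) (torso_edges e C) k.
Proof.
move=> e_sym tw sWV sPV pP P_conn WP_p lift_nbh.
apply: (tw_le_minor (f := contract_map P p) tw) => [w wW | a b aW bW].
  exact: contract_fiber_connected e_sym sPV pP P_conn (subsetP sWV w wW) (WP_p w wW).
case/orP => [eab | /and3P [aN bN ab]]; last exact: lift_nbh.
exists a, b; rewrite !contract_map_id ?(subsetP sWV) //; exact: WP_p.
Qed.

(** * Biconnected sets *)

Lemma cat_has2 (T : eqType) (P : pred T) (s : seq T) y y' :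
  y \in s -> y' \in s -> y != y' -> P y -> P y' ->
  exists s1 s2, [/\ s = s1 ++ s2, has P s1 & has P s2].
Proof.
case/splitPr => s1 s2; rewrite mem_cat inE => y'_s yy' Py Py'.
have [y's1 | y'Ns1] := boolP (y' \in s1).
  by exists s1, (y :: s2); rewrite /= Py; split=> //; apply/hasP; exists y'.
exists (rcons s1 y), s2; rewrite cat_rcons has_rcons Py; split=> //.
by apply/hasP; exists y'; move: y'_s; rewrite (negbTE y'Ns1) eq_sym (negbTE yy').
Qed.

Section Biconnected.
Variables (T : finType) (e : rel T).
Hypothesis e_sym : symmetric e.

Lemma touching_nbh (A S : {set T}) x :
  [disjoint A & S] -> x \in S -> x \in nbh e A -> touching e A S.
Proof.
by move=> dAS xS; rewrite inE => /andP [_ /exists_inP [u uA eux]]; split=> //; exists u, x.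
Qed.

Lemma path_cat_touching y s1 z s2 :
  path e y (s1 ++ z :: s2) -> uniq (y :: s1 ++ z :: s2) ->
  [/\ connected_set e [set:: y :: s1], connected_set e [set:: z :: s2]
    & touching e [set:: y :: s1] [set:: z :: s2]].
Proof.
rewrite cat_path -cat_cons cat_uniq => /andP [pth1 pth2] /and3P [_ noshare _].
move: pth2 => /= /andP [e_lz pth2].
split; try exact: path_connected_set.
split; last by exists (last y s1), z; rewrite !in_set mem_last mem_head.
apply/pred0P => x /=; rewrite !in_set; apply/negbTE/andP => -[x1 x2].
by apply: (negP noshare); apply/hasP; exists x.
Qed.

(* In a biconnected graph the component of [B \ Q] containing [a] sees at least two
   vertices of [Q]: removing any single one of them leaves [a] connected to the others. *)
Lemma card_nbh_component_gt1 (B Q : {set T}) a :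
  biconnected_set e B -> Q \subset B -> a \in B :\: Q -> 1 < #|Q| ->
  1 < #|Q :&: nbh e (component e (B :\: Q) a)|.
Proof.
move=> [_ B_bic] sQB aBQ /card_gt1P [b [b' [bQ b'Q bb']]].
set Za := component e (B :\: Q) a.
have sZa : Za \subset B :\: Q by apply: component_sub.
have other_nbh q t : q \in Q -> t \in Q -> t != q ->
    exists2 q', q' \in Q :&: nbh e Za & q' != q.
  move=> qQ tQ tq; have [aB aNQ] := setDP aBQ.
  have aBq : a \in B :\ q by rewrite !inE aB andbT; apply: contraNneq aNQ => ->.
  have tBq : t \in B :\ q by rewrite !inE tq (subsetP sQB).
  have tNZ : t \notin Za by apply: contraL tQ => /(subsetP sZa) /setDP [].
  have [z [z' [zZ z'NZ /and3P [_ /setD1P [z'q z'B] ez]]]] :=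
    connect_exit (B_bic q (subsetP sQB _ qQ) a t aBq tBq) (component_id e _ a) tNZ.
  have z'Q : z' \in Q.
    apply: contraNT z'NZ => z'NQ; apply: component_closed zZ (subsetP sZa _ zZ) _ ez.
    by rewrite inE z'NQ.
  by exists z' => //; rewrite in_setI z'Q (mem_nbh zZ z'NZ ez).
have [q1 /setIP [q1Q q1N]] := other_nbh b' b b'Q bQ bb'; rewrite eq_sym => b'q1.
have [q2 q2QN q2q1] := other_nbh q1 b' q1Q b'Q b'q1.
by apply/card_gt1P; exists q1, q2; rewrite eq_sym q2q1 inE q1Q q1N.
Qed.

Lemma path_split_two (N : {set T}) b q :
  path e b q -> uniq (b :: q) -> 1 < #|[set:: b :: q] :&: N| ->
  exists Zb Zc : {set T},
    [/\ Zb :|: Zc \subset [set:: b :: q], b \in Zb & last b q \in Zc] /\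
    [/\ connected_set e Zb, connected_set e Zc & touching e Zb Zc] /\
    (Zb :&: N != set0 /\ Zc :&: N != set0).
Proof.
move=> pth uq /card_gt1P [q1 [q2 [/setIP [q1s q1N] /setIP [q2s q2N] q12]]].
rewrite !in_set in q1s q2s.
have [s1 [s2 [Eq has1 has2]]] := cat_has2 (P := mem N) q1s q2s q12 q1N q2N.
case: s1 Eq has1 => [|y s1] //; case: s2 has2 => [|z s2] // has2 [<- Eq] has1.
rewrite {}Eq in pth uq *.
have [conn1 conn2 touch12] := path_cat_touching pth uq.
have meetN s : has (mem N) s -> [set:: s] :&: N != set0.
  by case/hasP => x xs xN; apply/set0Pn; exists x; rewrite inE in_set xs.
exists [set:: b :: s1], [set:: z :: s2]; split; last by rewrite !meetN.
split; last by rewrite in_set last_cat /= mem_last.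
  by apply/subsetP => x; rewrite !inE mem_cat inE -orbA.
by rewrite in_set mem_head.
Qed.

(* Three vertices of a biconnected graph root a triangle minor: a path from [b] to [c]
   avoiding [a] is split where the component of [a] off that path has its two
   attachments. *)
Lemma biconnected_rooted_triangle (B : {set T}) a b c :
  biconnected_set e B -> a \in B -> b \in B -> c \in B -> a != b -> b != c -> c != a ->
  exists Za Zb Zc : {set T},
    [/\ Za \subset B, Zb \subset B & Zc \subset B] /\
    [/\ a \in Za, b \in Zb & c \in Zc] /\
    [/\ connected_set e Za, connected_set e Zb & connected_set e Zc] /\
    [/\ touching e Za Zb, touching e Za Zc & touching e Zb Zc].
Proof.
move=> B_bic aB bB cB ab bc ca.
have bBa : b \in B :\ a by rewrite !inE eq_sym ab.
have cBa : c \in B :\ a by rewrite !inE ca.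
have [q [pth uq lastq]] :
    exists q, [/\ path (restr (B :\ a) e) b q, uniq (b :: q) & last b q = c].
  have /connectP [q0 pth0 ->] := B_bic.2 a aB b c bBa cBa.
  by case: (shortenP pth0) => q pth uq _; exists q.
set Q := [set:: b :: q].
have sQBa : Q \subset B :\ a.
  apply/subsetP => x; rewrite inE => /predU1P [-> | xq]; first by rewrite !inE eq_sym ab.
  exact: (allP (path_restr_in pth)).
have sQB : Q \subset B := subset_trans sQBa (subsetDl _ _).
have aBQ : a \in B :\: Q by rewrite inE aB andbT; apply/negP => /(subsetP sQBa); rewrite !inE eqxx.
set Za := component e (B :\: Q) a.
have sZa : Za \subset B :\: Q by apply: component_sub.
have Q_gt1 : 1 < #|Q|.
  by apply/card_gt1P; exists b, c; rewrite !in_set mem_head -lastq mem_last lastq.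
have pth_e : path e b q by apply: sub_path pth => x y /and3P [].
have [Zb [Zc [[sZQ bZb cZc] [[Zb_conn Zc_conn Zbc] [ZbN ZcN]]]]] :=
  path_split_two pth_e uq (card_nbh_component_gt1 B_bic sQB aBQ Q_gt1).
have [sZbQ sZcQ] : Zb \subset Q /\ Zc \subset Q by apply/andP; rewrite -subUset.
have touch_Za (Z : {set T}) : Z \subset Q -> Z :&: nbh e Za != set0 -> touching e Za Z.
  move=> sZ /set0Pn [x /setIP [xZ xN]].
  exact: touching_nbh (disjoint_subsetD sZa sZ) xZ xN.
exists Za, Zb, Zc; split.
  by split; [apply: subset_trans sZa (subsetDl _ _) | apply: subset_trans sQB..].
split; first by split; rewrite ?component_id -?lastq.
have Za_conn : connected_set e Za := component_connected e_sym (B :\: Q) a.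
by split; split=> //; apply: touch_Za.
Qed.

Lemma card_attachments_le2 (V B Y : {set T}) :
  tw_le V e 2 -> B \subset V -> biconnected_set e B ->
  Y \subset V :\: B -> connected_set e Y -> #|B :&: nbh e Y| <= 2.
Proof.
move=> tw sBV B_bic sYVB Y_conn; rewrite leqNgt.
have sYV : Y \subset V by apply: subset_trans sYVB (subsetDl _ _).
apply/negP => /card_gt2P [a [b [c [[/setIP [aB aN] /setIP [bB bN] /setIP [cB cN]] [ab bc ca]]]]].
have [Za [Zb [Zc [[sZa sZb sZc] [[aZ bZ cZ] [[Za_conn Zb_conn Zc_conn] [tab tac tbc]]]]]]] :=
  biconnected_rooted_triangle B_bic aB bB cB ab bc ca.
have touchY (Z : {set T}) u : Z \subset B -> u \in Z -> u \in nbh e Y -> touching e Y Z.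
  by move=> sZB; apply: touching_nbh (disjoint_subsetD sYVB sZB).
apply: (no_K4_model4 e_sym tw sYV (subset_trans sZa sBV) (subset_trans sZb sBV)
          (subset_trans sZc sBV) Y_conn Za_conn Zb_conn Zc_conn) => //.
- exact: touchY aZ aN.
- exact: touchY bZ bN.
- exact: touchY cZ cN.
Qed.

End Biconnected.

Section Boundary.
Variables (T : finType) (e : rel T) (X B : {set T}).
Hypotheses (e_sym : symmetric e) (modX : modulator e X).
Hypotheses (B_sub : B \subset ~: X) (B_bic : biconnected_set e B).

(* Contracting [B \ u] onto the second attachment [u'] realises the torso edge [u u']. *)
Lemma torso_tw2 (C : {set T}) u :
  C \subset ~: X :\: B -> nbh e C \subset B -> u \in nbh e C -> #|nbh e C| <= 2 ->
  tw_le (C :|: nbh e C) (torso_edges e C) 2.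
Proof.
move=> sCXB sNB uN N_le2.
have sBX (S : {set T}) : S \subset B -> S \subset ~: X by move/subset_trans; apply.
have sWX : C :|: nbh e C \subset ~: X by rewrite subUset (subset_trans sCXB) ?subsetDl ?sBX.
have uB := subsetP sNB u uN.
have CNB w : w \in C -> w \notin B by move/(subsetP sCXB)/setDP => [].
case: (boolP [exists u' in nbh e C, u' != u]) => [/exists_inP [u' u'N u'u] | /exists_inPn Nu].
  have N_uu' w : w \in nbh e C -> w = u \/ w = u'.
    move=> wN; apply/pred2P; apply: contraLR N_le2; rewrite negb_or -ltnNge => /andP [wu wu'].
    by apply/card_gt2P; exists u, u', w; rewrite eq_sym u'u eq_sym wu wu'.
  have u'B := subsetP sNB u' u'N.
  have [z0 z0Bu euz0] := connected_set_neighbour B_bic.1 uB u'B u'u.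
  have z0B : z0 \in B by case/setD1P: z0Bu.
  have u'Bu : u' \in B :\ u by rewrite !inE u'u.
  have [cu cz0] : contract_map (B :\ u) u' u = u /\ contract_map (B :\ u) u' z0 = u'.
    by rewrite /contract_map z0Bu in_setD1 eqxx.
  apply: (torso_tw_le_contract e_sym modX sWX (sBX _ (subsetDl _ _)) u'Bu).
  - split; first by apply/set0Pn; exists u'.
    by move=> x y; apply: (B_bic.2 u uB).
  - move=> w /setUP [/CNB wNB /setD1P [_ wB] | /N_uu' [-> /setD1P [] | -> //]].
      by rewrite wB in wNB.
    by rewrite eqxx.
  move=> a b /N_uu' [] -> /N_uu' [] -> //; rewrite ?eqxx // => _.
    by exists u, z0; rewrite cu cz0 !(subsetP B_sub).
  by exists z0, u; rewrite cu cz0 e_sym !(subsetP B_sub).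
have N_u w : w \in nbh e C -> w = u by move=> /Nu; rewrite negbK => /eqP.
have uu : u \in [set u] := set11 u.
apply: (torso_tw_le_contract e_sym modX sWX (sBX _ _) uu (connected_set1 e_sym _)).
- by rewrite sub1set.
- by move=> w _ /set1P.
by move=> a b /N_u -> /N_u ->; rewrite eqxx.
Qed.

Lemma mem_setCD1B x : x \in X -> x \in ~: (X :\ x) :\: B.
Proof. by move=> xX; rewrite !inE eqxx /= (contraTN _ xX) // => /(subsetP B_sub); rewrite inE. Qed.

Lemma boundary_sub_attachments t : ~ trivial_instance e t ->
  boundary e B \subset \bigcup_(x in X) (B :&: nbh e (component e (~: (X :\ x) :\: B) x)).
Proof.
move=> nontriv; apply/subsetP => u /setIdP [uB /existsP [v /andP [vNB euv]]].
have evu : e v u by rewrite e_sym.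
have seen_by (S R : {set T}) y : S \subset R :\: B -> y \in S -> e y u -> u \in nbh e S.
  by move=> sSRB yS; apply: mem_nbh yS _; apply: contraTN uB => /(subsetP sSRB) /setDP [].
have attach x y : x \in X -> y \in component e (~: (X :\ x) :\: B) x -> e y u ->
    u \in \bigcup_(x in X) (B :&: nbh e (component e (~: (X :\ x) :\: B) x)).
  move=> xX yY eyu; apply/bigcupP; exists x; rewrite // inE uB.
  exact: (seen_by _ _ _ (component_sub e (mem_setCD1B xX)) yY eyu).
have [vX | vNX] := boolP (v \in X); first exact: (attach v v vX (component_id _ _ _) evu).
have vR : v \in ~: X :\: B by rewrite !inE vNX vNB.
set C := component e (~: X :\: B) v.
have sCR : C \subset ~: X :\: B := component_sub e vR.
case: (boolP [exists w in C, exists x in X, e w x]).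
  case/exists_inP => w wC /exists_inP [x xX ewx]; apply: (attach x v xX _ evu).
  apply: (component_edge e_sym _ vR (mem_setCD1B xX) wC); last by rewrite e_sym.
  by apply: setSD; rewrite setCS subsetDl.
rewrite negb_exists_in => /forall_inP noX.
have sNB : nbh e C \subset B.
  apply/subsetP => z zN; have := subsetP (nbh_component_sub e vR) z zN.
  rewrite !inE negb_and !negbK => /orP [// | zX].
  move: zN; rewrite inE => /andP [_ /exists_inP [w wC ewz]].
  by case/existsP: (noX w wC); exists z; rewrite zX.
have uN : u \in nbh e C := seen_by _ _ _ sCR (component_id e _ v) evu.
have C_conn := component_connected e_sym (~: X :\: B) v.
case: nontriv; apply: Or44; exists C, e; split.
  by split=> //; case: C_conn.
have N_le2 : #|nbh e C| <= 2.
  by rewrite -(setIidPr sNB); apply: (card_attachments_le2 e_sym modX B_sub B_bic sCR C_conn).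
exact: torso_tw2 sCR sNB uN N_le2.
Qed.

End Boundary.

Theorem mainTheorem10 (T : finType) (e : rel T) (t : nat)
  (e_sym : symmetric e) (e_irr : irreflexive e)
  (nontriv : ~ trivial_instance e t)
  (X : {set T}) (tidyX : tidy_modulator e X)
  (B : {set T}) (B_sub : B \subset ~: X) (B_bic : biconnected_set e B) :
  #|boundary e B| <= 2 * #|X|.
Proof.
case: tidyX => modX tidyX.
apply: leq_trans (subset_leq_card (boundary_sub_attachments e_sym modX B_sub B_bic nontriv)) _.
apply: leq_trans (card_bigcup_le _ _) _; rewrite mulnC -sum_nat_const.
apply: leq_sum => x xX.
have sBX : B \subset ~: (X :\ x) by apply: subset_trans B_sub _; rewrite setCS subsetDl.
exact: (card_attachments_le2 e_sym (tidyX x xX) sBX B_bic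
  (component_sub e (mem_setCD1B B_sub xX)) (component_connected e_sym _ _)).
Qed.
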